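(* Let $m,n$ be positive integers. (1) If $n$ is odd, $m$ is odd, and at least one of $m,n$ is larger than $1$, then there is no nullhomotopic knight's tour on $\mathcal{M}_{m,n}$ and no nullhomotopic knight's tour on $\mathcal{K}_{m,n}$. (2) Suppose $n$ is even. If $m$ is even, there is no generating knight's tour on $\mathcal{M}_{m,n}$ and no Möbius knight's tour on $\mathcal{K}_{m,n}$. If $m$ is odd, there is no cylindrical knight's tour on $\mathcal{K}_{m,n}$.
   Context: Let $\mathcal{P}$ be the graph with vertex set $\mathbb{Z}^2$ in which $(a,b)$ and $(a',b')$ are adjacent iff $\{|a-a'|,|b-b'|\}=\{1,2\}$, and let $\mathcal{S}_m$ be its induced subgraph on $\{(a,b): 0\le a<m\}$. Let $\tau(a,b)=(a+m,b)$ and $\sigma(a,b)=(m-1-a,\,b+n)$. Define the multigraph $\mathcal{M}_{m,n}=\mathcal{S}_m/\langle\sigma\rangle$ and the pseudograph $\mathcal{K}_{m,n}=\mathcal{P}/\langle\tau,\sigma\rangle$ (vertices and edges are orbits of vertices and edges under these free actions; multiple edges and loops may occur); these are the knight's move graphs of the $m\times n$ Möbius strip and Klein bottle boards, and the quotient maps are coverings. A knight's tour is a closed walk visiting every vertex exactly once apart from the repeated start/end vertex (a Hamiltonian cycle). Regard a tour as a closed walk based at vertex $(0,0)$ and take its unique lift (to $\mathcal{S}_m$, resp. $\mathcal{P}$) starting at $(0,0)$. A tour on $\mathcal{M}_{m,n}$ is nullhomotopic if the lift ends at $(0,0)$ and generating if it ends at $(m-1,\pm n)$. A tour on $\mathcal{K}_{m,n}$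 is nullhomotopic if the lift ends at $(0,0)$, cylindrical if it ends at $(\pm m,0)$, and Möbius if it ends at $(m-1,\pm n)$. *)

From Stdlib Require Import ZArith List Relations.
Import ListNotations.
Open Scope Z_scope.

Definition pt := (Z * Z)%type.

Definition knight_adj (x y : pt) : Prop :=
  (Z.abs (fst x - fst y) = 1 /\ Z.abs (snd x - snd y) = 2) \/
  (Z.abs (fst x - fst y) = 2 /\ Z.abs (snd x - snd y) = 1).

Definition in_strip (m : Z) (x : pt) : Prop := 0 <= fst x < m.

Definition tau (m : Z) (x : pt) : pt := (fst x + m, snd x).
Definition sigma (m n : Z) (x : pt) : pt := (m - 1 - fst x, snd x + n).

Definition gen_step (gens : list (pt -> pt)) (x y : pt) : Prop :=
  exists g, In g gens /\ y = g x.
Definition same_orbit (gens : list (pt -> pt)) : relation pt :=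
  clos_refl_sym_trans pt (gen_step gens).

(* Orbits of oriented edges (x,y); an (unoriented) edge orbit of the
   quotient is identified with the orbit of (x,y) together with that of (y,x). *)
Definition edge_step (gens : list (pt -> pt)) (e f : pt * pt) : Prop :=
  exists g, In g gens /\ f = (g (fst e), g (snd e)).
Definition same_edge (gens : list (pt -> pt)) (e f : pt * pt) : Prop :=
  clos_refl_sym_trans (pt * pt) (edge_step gens) e f \/
  clos_refl_sym_trans (pt * pt) (edge_step gens) e (snd f, fst f).

(* A knight's tour (Hamiltonian cycle) on the quotient D / <gens>, regarded as a
   closed walk of length N based at the vertex of (0,0), given by its unique
   lift p_0 = (0,0), p_1, ..., p_N to the cover (vertex set D, knight moves).
   - consecutive lift points are knight-adjacent (so edge i of the walk is
     the orbit of the cover edge {p_i, p_(i+1)});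
   - the walk is closed in the quotient: p_N lies in the orbit of p_0;
   - every vertex of the quotient is visited by exactly one p_i, i < N;
   - the N edges of the walk are pairwise distinct edges of the quotient. *)
Definition is_tour (D : pt -> Prop) (gens : list (pt -> pt)) (N : nat)
    (p : nat -> pt) : Prop :=
  p 0%nat = (0, 0) /\
  (forall i, (i <= N)%nat -> D (p i)) /\
  (forall i, (i < N)%nat -> knight_adj (p i) (p (S i))) /\
  same_orbit gens (p N) (p 0%nat) /\
  (forall x, D x -> exists! i, (i < N)%nat /\ same_orbit gens (p i) x) /\
  (forall i j, (i < j)%nat -> (j < N)%nat ->
     ~ same_edge gens (p i, p (S i)) (p j, p (S j))).

Definition mobius_tour (m n : Z) (N : nat) (p : nat -> pt) : Prop :=
  is_tour (in_strip m) [sigma m n] N p.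

Definition klein_tour (m n : Z) (N : nat) (p : nat -> pt) : Prop :=
  is_tour (fun _ => True) [tau m; sigma m n] N p.

(* Homotopy types, read off from the endpoint p_N of the lift. *)
Definition nullhomotopic (N : nat) (p : nat -> pt) : Prop := p N = (0, 0).
Definition generating (m n : Z) (N : nat) (p : nat -> pt) : Prop :=
  p N = (m - 1, n) \/ p N = (m - 1, - n).
Definition cylindrical (m : Z) (N : nat) (p : nat -> pt) : Prop :=
  p N = (m, 0) \/ p N = (- m, 0).
Definition mobius_type (m n : Z) (N : nat) (p : nat -> pt) : Prop :=
  p N = (m - 1, n) \/ p N = (m - 1, - n).

(** A knight move changes the parity of [a + b], so the lift of a closed walk
    of length [N] based at the origin ends at a point whose coordinate sum has
    the parity of [N].  A tour visits each vertex of the quotient exactly once,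
    and the box [[0, m) × [0, n)] is a transversal of the orbits of [<sigma>] on
    [S_m] and of [<tau, sigma>] on [Z^2]; hence [N = m n].  In each case of the
    theorem the forbidden endpoint has coordinate sum of the wrong parity. *)

From Stdlib Require Import ZArith List Relations Lia.
Open Scope Z_scope.

Lemma NoDup_list_prod {A B : Type} (l : list A) (l' : list B) :
  NoDup l -> NoDup l' -> NoDup (list_prod l l').
Proof.
  intros Hl Hl'; induction Hl as [|a l Ha Hl IHl]; simpl; [constructor|].
  apply NoDup_app; [|exact IHl|].
  - apply NoDup_map_NoDup_ForallPairs; [|exact Hl'].
    intros y y' _ _ E; congruence.
  - intros [x y] Hxy Hin.
    apply in_map_iff in Hxy as [y' [E _]]; injection E as <- _.
    apply in_prod_iff in Hin as [Hin _]; contradiction.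
Qed.

Section Orbits.

Variable gens : list (pt -> pt).

Lemma orbit_step g x : In g gens -> same_orbit gens x (g x).
Proof. intros Hg; apply rst_step; exists g; auto. Qed.

Lemma orbit_invariant {A : Type} (r : pt -> A) :
  (forall g x, In g gens -> r (g x) = r x) ->
  forall x y, same_orbit gens x y -> r x = r y.
Proof.
  intros Hr x y Hxy; induction Hxy as [x y [g [Hg ->]]| | |]; try congruence.
  symmetry; apply Hr, Hg.
Qed.

(* [i |-> r (p i)] is a bijection from the steps of the tour onto [B]. *)
Lemma tour_length_transversal D N p (r : pt -> pt) (B : list pt) :
  NoDup B ->
  (forall x, D x -> In (r x) B) ->
  (forall b, In b B -> D b /\ r b = b) ->
  (forall x, D x -> same_orbit gens x (r x)) ->
  (forall x y, same_orbit gens x y -> r x = r y) ->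
  is_tour D gens N p -> N = length B.
Proof.
  intros HB Hr_in HB_fix Hrep Hinv [_ [HDp [_ [_ [Huniq _]]]]].
  set (visits := map (fun i => r (p i)) (seq 0 N)).
  assert (Hvisits : NoDup visits).
  { apply NoDup_map_NoDup_ForallPairs; [|apply seq_NoDup].
    intros i j Hi Hj E; apply in_seq in Hi, Hj.
    assert (Hij : same_orbit gens (p i) (p j)).
    { apply rst_trans with (r (p i)); [apply Hrep, HDp; lia|].
      rewrite E; apply rst_sym, Hrep, HDp; lia. }
    destruct (Huniq (p j) (HDp j ltac:(lia))) as [k [_ Hk]].
    transitivity k; [symmetry|]; apply Hk; split; [lia|exact Hij|lia|apply rst_refl]. }
  assert (Hincl : incl visits B).
  { intros y Hy; apply in_map_iff in Hy as [i [<- Hi]]; apply in_seq in Hi.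
    apply Hr_in, HDp; lia. }
  assert (Hcover : incl B visits).
  { intros b Hb; destruct (HB_fix b Hb) as [HDb Hrb].
    destruct (Huniq b HDb) as [i [[Hi Hib] _]].
    apply in_map_iff; exists i; split; [rewrite (Hinv _ _ Hib); exact Hrb|].
    apply in_seq; lia. }
  apply NoDup_incl_length in Hincl; [|exact Hvisits].
  apply NoDup_incl_length in Hcover; [|exact HB].
  unfold visits in *; rewrite length_map, length_seq in *; lia.
Qed.

End Orbits.

Lemma even_abs d : Z.even (Z.abs d) = Z.even d.
Proof. destruct (Z.abs_spec d) as [[_ ->]|[_ ->]]; [|apply Z.even_opp]; reflexivity. Qed.

Lemma knight_adj_parity x y :
  knight_adj x y -> Z.even (fst y + snd y) = negb (Z.even (fst x + snd x)).
Proof.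
  intros Hxy.
  assert (Hodd : Z.even ((fst x - fst y) + (snd x - snd y)) = false).
  { rewrite Z.even_add, <- even_abs, <- (even_abs (snd x - snd y)), <- Z.even_add.
    destruct Hxy as [[-> ->]|[-> ->]]; reflexivity. }
  replace (fst y + snd y) with ((fst x + snd x) - ((fst x - fst y) + (snd x - snd y)))
    by ring.
  rewrite Z.even_sub, Hodd; destruct (Z.even _); reflexivity.
Qed.

Lemma knight_walk_parity (p : nat -> pt) N :
  p 0%nat = (0, 0) -> (forall i, (i < N)%nat -> knight_adj (p i) (p (S i))) ->
  Z.even (fst (p N) + snd (p N)) = Z.even (Z.of_nat N).
Proof.
  intros H0 Hadj; induction N as [|N IHN]; [rewrite H0; reflexivity|].
  rewrite (knight_adj_parity _ _ (Hadj N ltac:(lia))), IHN by (intros; apply Hadj; lia).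
  rewrite Nat2Z.inj_succ, Z.even_succ, <- Z.negb_even; reflexivity.
Qed.

Lemma tour_endpoint_parity D gens N p :
  is_tour D gens N p -> Z.even (fst (p N) + snd (p N)) = Z.even (Z.of_nat N).
Proof. intros [H0 [_ [Hadj _]]]; exact (knight_walk_parity p N H0 Hadj). Qed.

Definition zrange (k : Z) : list Z := map Z.of_nat (seq 0 (Z.to_nat k)).

Lemma in_zrange k x : In x (zrange k) <-> 0 <= x < k.
Proof.
  unfold zrange; rewrite in_map_iff; split.
  - intros [i [<- Hi]]; apply in_seq in Hi; lia.
  - intros Hx; exists (Z.to_nat x); split; [lia|apply in_seq; lia].
Qed.

Lemma NoDup_zrange k : NoDup (zrange k).
Proof.
  apply NoDup_map_NoDup_ForallPairs; [|apply seq_NoDup].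
  intros i j _ _; lia.
Qed.

Section Box.

Variables m n : Z.
Hypothesis Hm : 0 < m.
Hypothesis Hn : 0 < n.

Definition box : list (Z * Z) := list_prod (zrange m) (zrange n).

Lemma in_box x : In x box <-> 0 <= fst x < m /\ 0 <= snd x < n.
Proof. destruct x; unfold box; rewrite in_prod_iff, !in_zrange; reflexivity. Qed.

Lemma length_box : Z.of_nat (length box) = m * n.
Proof. unfold box, zrange; rewrite length_prod, !length_map, !length_seq; lia. Qed.

(* Normal form under [<tau, sigma>]: [tau] reduces [a] modulo [m], and each of
   the [b / n] applications of [sigma] needed to bring [b] into [[0, n)]
   reflects [a] to [m - 1 - a]. *)
Definition fold_box (x : pt) : pt :=
  let a := fst x mod m in
  (if Z.even (snd x / n) then a else m - 1 - a, snd x mod n).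

Lemma fold_box_in_box x : In (fold_box x) box.
Proof.
  apply in_box; unfold fold_box; simpl.
  pose proof (Z.mod_pos_bound (fst x) m Hm); pose proof (Z.mod_pos_bound (snd x) n Hn).
  destruct (Z.even _); lia.
Qed.

Lemma fold_box_id x : In x box -> fold_box x = x.
Proof.
  destruct x as [a b]; rewrite in_box; simpl; intros [Ha Hb]; unfold fold_box; simpl.
  rewrite Z.mod_small, (Z.mod_small b), Z.div_small by lia; reflexivity.
Qed.

Lemma fold_box_tau x : fold_box (tau m x) = fold_box x.
Proof.
  destruct x as [a b]; unfold fold_box, tau; simpl.
  replace (a + m) with (a + 1 * m) by ring; rewrite Z.mod_add by lia; reflexivity.
Qed.

Lemma mod_reflect a : (m - 1 - a) mod m = m - 1 - a mod m.
Proof.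
  symmetry; apply (Z.mod_unique _ _ (- (a / m))).
  - left; pose proof (Z.mod_pos_bound a m Hm); lia.
  - pose proof (Z.div_mod a m); lia.
Qed.

Lemma fold_box_sigma x : fold_box (sigma m n x) = fold_box x.
Proof.
  destruct x as [a b]; unfold fold_box, sigma; simpl.
  rewrite mod_reflect; replace (b + n) with (b + 1 * n) by ring.
  rewrite Z.div_add, Z.mod_add, Z.even_add by lia.
  destruct (Z.even (b / n)); simpl; f_equal; lia.
Qed.

Lemma fold_box_orbit_invariant gens :
  (forall g, In g gens -> g = tau m \/ g = sigma m n) ->
  forall x y, same_orbit gens x y -> fold_box x = fold_box y.
Proof.
  intros Hgens; apply orbit_invariant.
  intros g x Hg; destruct (Hgens g Hg) as [->| ->]; [apply fold_box_tau|apply fold_box_sigma].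
Qed.

Lemma sigma_shift_orbit gens : In (sigma m n) gens ->
  forall q a c, same_orbit gens (a, n * q + c) (if Z.even q then a else m - 1 - a, c).
Proof.
  intros Hg q; induction q as [|q IHq|q IHq] using Z.peano_ind; intros a c.
  - rewrite Z.mul_0_r; apply rst_refl.
  - specialize (IHq (m - 1 - a) c); rewrite Z.even_succ, <- Z.negb_even.
    replace (a, n * Z.succ q + c) with (sigma m n (m - 1 - a, n * q + c))
      by (unfold sigma; simpl; f_equal; lia).
    apply rst_trans with (m - 1 - a, n * q + c); [apply rst_sym, orbit_step, Hg|].
    destruct (Z.even q); simpl; [exact IHq|].
    replace a with (m - 1 - (m - 1 - a)) at 2 by ring; exact IHq.
  - specialize (IHq (m - 1 - a) c); rewrite Z.even_pred, <- Z.negb_even.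
    replace (m - 1 - a, n * q + c) with (sigma m n (a, n * Z.pred q + c)) in IHq
      by (unfold sigma; simpl; f_equal; lia).
    apply rst_trans with (sigma m n (a, n * Z.pred q + c)); [apply orbit_step, Hg|].
    destruct (Z.even q); simpl in *; [exact IHq|].
    replace a with (m - 1 - (m - 1 - a)) at 2 by ring; exact IHq.
Qed.

Lemma tau_shift_orbit gens : In (tau m) gens ->
  forall k a b, same_orbit gens (m * k + a, b) (a, b).
Proof.
  intros Hg k; induction k as [|k IHk|k IHk] using Z.peano_ind; intros a b.
  - rewrite Z.mul_0_r; apply rst_refl.
  - replace (m * Z.succ k + a, b) with (tau m (m * k + a, b))
      by (unfold tau; simpl; f_equal; lia).
    apply rst_trans with (m * k + a, b); [apply rst_sym, orbit_step, Hg|apply IHk].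
  - apply rst_trans with (m * k + a, b); [|apply IHk].
    replace (m * k + a, b) with (tau m (m * Z.pred k + a, b))
      by (unfold tau; simpl; f_equal; lia).
    apply orbit_step, Hg.
Qed.

Lemma mod_orbit_fold_box gens : In (sigma m n) gens ->
  forall a b, same_orbit gens (a mod m, b) (fold_box (a, b)).
Proof.
  intros Hg a b; unfold fold_box; simpl.
  replace (a mod m, b) with (a mod m, n * (b / n) + b mod n)
    by (f_equal; symmetry; apply Z.div_mod; lia).
  apply sigma_shift_orbit, Hg.
Qed.

Lemma strip_orbit_fold_box gens : In (sigma m n) gens ->
  forall x, in_strip m x -> same_orbit gens x (fold_box x).
Proof.
  intros Hg [a b] Ha; unfold in_strip in Ha; simpl in Ha.
  rewrite <- (Z.mod_small a m Ha) at 1; apply mod_orbit_fold_box, Hg.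
Qed.

Lemma plane_orbit_fold_box gens : In (tau m) gens -> In (sigma m n) gens ->
  forall x, same_orbit gens x (fold_box x).
Proof.
  intros Htau Hsigma [a b].
  apply rst_trans with (a mod m, b).
  - rewrite (Z.div_mod a m) at 1 by lia; apply tau_shift_orbit, Htau.
  - apply mod_orbit_fold_box, Hsigma.
Qed.

Lemma tour_length_box D gens N p :
  (forall g, In g gens -> g = tau m \/ g = sigma m n) ->
  (forall x, D x -> same_orbit gens x (fold_box x)) ->
  (forall x, In x box -> D x) ->
  is_tour D gens N p -> Z.of_nat N = m * n.
Proof.
  intros Hgens Hrep Hbox Htour; rewrite <- length_box; f_equal.
  apply (tour_length_transversal gens D N p fold_box box); auto.
  - apply NoDup_list_prod; apply NoDup_zrange.
  - intros; apply fold_box_in_box.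
  - intros b Hb; split; [apply Hbox, Hb|apply fold_box_id, Hb].
  - apply fold_box_orbit_invariant, Hgens.
Qed.

Lemma mobius_tour_length N p : mobius_tour m n N p -> Z.of_nat N = m * n.
Proof.
  apply tour_length_box.
  - intros g [<-|[]]; auto.
  - intros x Hx; apply strip_orbit_fold_box; simpl; auto.
  - intros x Hx; apply in_box in Hx; unfold in_strip; tauto.
Qed.

Lemma klein_tour_length N p : klein_tour m n N p -> Z.of_nat N = m * n.
Proof.
  apply tour_length_box; auto.
  - intros g [<-|[<-|[]]]; auto.
  - intros x _; apply plane_orbit_fold_box; simpl; auto.
Qed.

End Box.

Theorem proposition3p5 (m n : Z) (Hm : 0 < m) (Hn : 0 < n) :
  (Z.odd n = true -> Z.odd m = true -> (1 < m \/ 1 < n) ->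
     (forall N p, mobius_tour m n N p -> ~ nullhomotopic N p) /\
     (forall N p, klein_tour m n N p -> ~ nullhomotopic N p)) /\
  (Z.even n = true ->
     (Z.even m = true ->
        (forall N p, mobius_tour m n N p -> ~ generating m n N p) /\
        (forall N p, klein_tour m n N p -> ~ mobius_type m n N p)) /\
     (Z.odd m = true ->
        forall N p, klein_tour m n N p -> ~ cylindrical m N p)).
Proof.
  assert (Hmobius : forall N p, mobius_tour m n N p ->
            Z.even (fst (p N) + snd (p N)) = Z.even (m * n)).
  { intros N p H; rewrite <- (mobius_tour_length m n Hm Hn N p H).
    apply (tour_endpoint_parity _ _ _ _ H). }
  assert (Hklein : forall N p, klein_tour m n N p ->
            Z.even (fst (p N) + snd (p N)) = Z.even (m * n)).
  { intros N p H; rewrite <- (klein_tour_length m n Hm Hn N p H).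
    apply (tour_endpoint_parity _ _ _ _ H). }
  rewrite <- !Z.negb_even; split.
  - (* The parity argument does not need [1 < m \/ 1 < n]. *)
    intros On Om _.
    assert (Hmn : Z.even (m * n) = false)
      by (rewrite Z.even_mul; destruct (Z.even m), (Z.even n); easy).
    split; intros N p Htour Hend; [apply Hmobius in Htour | apply Hklein in Htour];
      rewrite Hend, Hmn in Htour; discriminate.
  - intros En.
    assert (Hmn : Z.even (m * n) = true)
      by (rewrite Z.even_mul, En, Bool.orb_true_r; reflexivity).
    split; [intros Em; split | intros Om]; intros N p Htour Hend;
      [apply Hmobius in Htour | apply Hklein in Htour | apply Hklein in Htour];
      destruct Hend as [Hend | Hend]; rewrite Hend, Hmn in Htour; simpl in Htour;
      rewrite ?Z.even_add, ?Z.even_sub, ?Z.even_opp, ?En in Htour;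
      destruct (Z.even m); discriminate.
Qed.
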